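(* Let $t\ge 3$. Consider a position in the Strong Ramsey game $\mathcal{R}(K_{\aleph_0}^{(3)}, K^{(3)}_{2,t+1}(t-2))$ in which $P_2$ has claimed all edges of a copy of $K^{(3)}_{2,t}(t-2)$ with main vertices $x,y$ and center $c$, and suppose that (i) $P_1$ does not have a threat; (ii) $P_1$ has not claimed all edges of a copy of $K_{2,t}^{(3)}$ whose center is $c$ and one of whose main vertices is $x$; (iii) $P_1$ has not claimed all edges of a copy of $K_{2,t}^{(3)}$ whose center is $x$ and one of whose main vertices is $c$. If it is $P_2$'s turn, then $P_2$ has a strategy from this position guaranteeing that $P_1$ never claims all edges of a copy of $K^{(3)}_{2,t+1}(t-2)$ (a drawing strategy).
   Context: Strong Ramsey game $\mathcal{R}(B,G)$: players $P_1$, $P_2$ alternately claim unclaimed edges of the $k$-uniform hypergraph $B$, $P_1$ first; the first to claim all edges of a copy of the finite $k$-uniform hypergraph $G$ wins; if nobody does so in finitely many moves the game is a draw. $K_{\aleph_0}^{(3)}$ is the complete $3$-uniform hypergraph on a countably infinite vertex set. For $s\ge0$, $t\ge3$, $K_{2,t}(s)$ is the graph obtained from $K_{2,t}$ by identifying the center of a star with $s$ leaves (the leaves being new vertices) with one of the two vertices of degree $t$. For a graph $H$, $H^{(3)}$ is the $3$-uniform hypergraph obtained by adding one fixed new vertex (the center) to every edge of $H$. Main vertices of $K_{2,t}(s)^{(3)}$ and $K_{2,t}^{(3)}$: the vertices of degree at least $3$ in the underlying graph, i.e. the two vertices of the part of size $2$ of $K_{2,t}$. $P_1$ has a threat if she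 has claimed all edges of a copy of $K^{(3)}_{2,t+1}(t-2)$ minus one edge $e$, where the edge of the board corresponding to $e$ is claimed by neither player. *)

From mathcomp Require Import all_boot finmap.
Set Implicit Arguments. Unset Strict Implicit. Unset Printing Implicit Defensive.
Local Open Scope fset_scope.

(* Vertices of K_{aleph_0}^{(3)} are natural numbers; an edge (board element)
   is a 3-element finite set of naturals. *)
Definition edge := {fset nat}.
Definition is_edge (e : edge) : bool := #|` e| == 3.

(* The edges of the 3-graph K_{2,t}(s)^{(3)} placed on the board with
   center c, main vertices x (the one carrying the star) and y,
   common neighbours Z (|Z| = t) and star leaves W (|W| = s). *)
Definition K_edges (c x y : nat) (Z W : seq nat) : seq edge :=
  [seq [fset c; x; z] | z <- Z] ++ [seq [fset c; y; z] | z <- Z]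
  ++ [seq [fset c; x; w] | w <- W].

Definition K_valid (t s c x y : nat) (Z W : seq nat) : bool :=
  [&& uniq (c :: x :: y :: Z ++ W), size Z == t & size W == s].

Definition K_copy_in (P : seq edge) (t s c x y : nat) : Prop :=
  exists Z W : seq nat, K_valid t s c x y Z W /\ {subset K_edges c x y Z W <= P}.

Definition has_target (t : nat) (P : seq edge) : Prop :=
  exists c x y, K_copy_in P t.+1 (t - 2) c x y.

Definition threat (t : nat) (A B : seq edge) : Prop :=
  exists c x y (Z W : seq nat) (e : edge),
    [/\ K_valid t.+1 (t - 2) c x y Z W, e \in K_edges c x y Z W,
        e \notin A, e \notin B &
        {in K_edges c x y Z W, forall f, f != e -> f \in A}].

(* Continuation of the game from the position (A, B) with P_2 to move:
   m k is the k-th move after the position; even k are P_2's moves,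
   odd k are P_1's moves. *)
Definition history (m : nat -> edge) (k : nat) : seq edge := map m (iota 0 k).

Definition legal_move (A B : seq edge) (m : nat -> edge) (k : nat) : bool :=
  is_edge (m k) && (m k \notin A ++ B ++ history m k).

Definition claimed1 (A : seq edge) (m : nat -> edge) (k : nat) : seq edge :=
  A ++ [seq m i | i <- iota 0 k & odd i].
Definition claimed2 (B : seq edge) (m : nat -> edge) (k : nat) : seq edge :=
  B ++ [seq m i | i <- iota 0 k & ~~ odd i].

(* sigma is a drawing strategy for P_2 from (A, B) with P_2 to move:
   in every play following sigma (with P_1 playing legally), P_2's moves are
   legal and P_1 never completes a copy of the target unless P_2 has already
   completed one (which ends the game earlier). *)
Definition P2_draw_strategy (t : nat) (A B : seq edge) (sigma : seq edge -> edge) : Prop :=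
  forall m : nat -> edge,
    (forall k, ~~ odd k -> m k = sigma (history m k)) ->
    (forall k, odd k -> legal_move A B m k) ->
    (forall k, ~~ odd k -> legal_move A B m k) /\
    (forall k, has_target t (claimed1 A m k) -> has_target t (claimed2 B m k)).

From mathcomp Require Import all_boot finmap zify.
Set Implicit Arguments. Unset Strict Implicit. Unset Printing Implicit Defensive.
Local Open Scope fset_scope.

(* P_2 keeps claiming spokes [c, y, z] at brand-new vertices z.  As soon as P_1
   fails to answer with [c, x, z], P_2 claims [c, x, z] and z becomes a new common
   neighbour of x and y in her copy, completing the target.  While P_1 does answer,
   every new vertex z lies in at most two of P_1's edges (the spoke [c, x, z] and her
   very last move e), so it can only be a leaf of a target copy in P_1's graph.  A
   copy avoiding these spokes lies in A + e, which (i) and the absence of a target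
   in A exclude.  A copy using a spoke [c, x, z] has {c, x} as its center and one main
   vertex; each of its t+1 common neighbours is then joined to both main vertices by
   edges of A unless e is one of these two edges, so P_1 has a K_{2,t} with center c
   and main vertex x, or center x and main vertex c, against (ii) or (iii). *)

Lemma in_fset3 (a b c v : nat) : (v \in [fset a; b; c]) = [|| v == a, v == b | v == c].
Proof. by rewrite !inE orbA. Qed.

Lemma card_fset3 (a b c : nat) : a != b -> a != c -> b != c -> #|` [fset a; b; c]| = 3.
Proof.
move=> ab ac bc; rewrite fsetUC cardfsU1 cardfs2 !inE ab.
by rewrite (eq_sym c a) (eq_sym c b) negb_or ac bc.
Qed.

Lemma fset3_inj (a b u v : nat) : u != a -> u != b -> [fset a; b; u] = [fset a; b; v] -> u = v.
Proof.
move=> ua ub E; have : u \in [fset a; b; v] by rewrite -E in_fset3 eqxx !orbT.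
by rewrite in_fset3 (negbTE ua) (negbTE ub) => /eqP.
Qed.

Lemma fset3_pair (a b a' b' z : nat) : z \notin [fset a; b] -> z \notin [fset a'; b'] ->
  [fset a; b; z] = [fset a'; b'; z] -> [fset a; b] = [fset a'; b'].
Proof.
move=> za za' E; rewrite -(fsetU1K za) -(fsetU1K za') ![z |` _]fsetUC.
by rewrite /= E.
Qed.

Lemma fset2_eq (a b a' b' : nat) : [fset a; b] = [fset a'; b'] -> a != b ->
  (a = a' /\ b = b') \/ (a = b' /\ b = a').
Proof.
move=> E ab.
have : a \in [fset a'; b'] by rewrite -E in_fset2 eqxx.
have : b \in [fset a'; b'] by rewrite -E in_fset2 eqxx orbT.
rewrite !in_fset2 => /orP[] /eqP bE /orP[] /eqP aE; subst; rewrite ?eqxx // in ab;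
  by [right | left].
Qed.

Lemma K_valid_inv t s c x y Z W : K_valid t s c x y Z W ->
  [/\ [/\ c != x, c != y & x != y], [/\ c \notin Z, x \notin Z & y \notin Z],
      uniq Z & size Z = t].
Proof.
case/and3P=> + /eqP sZ _; rewrite /= !inE !mem_cat !negb_or cat_uniq.
by case/and5P=> /and4P[-> -> -> _] /and3P[-> -> _] /andP[-> _] ->.
Qed.

Lemma K_edgesP c x y Z W g : g \in K_edges c x y Z W ->
  exists u, [\/ u \in Z /\ g = [fset c; x; u], u \in Z /\ g = [fset c; y; u]
               | u \in W /\ g = [fset c; x; u]].
Proof.
by rewrite !mem_cat => /or3P[] /mapP[u uin ->]; exists u; [apply: Or31 | apply: Or32 | apply: Or33].
Qed.

Lemma mem_K_edges_x c x y Z W u : u \in Z -> [fset c; x; u] \in K_edges c x y Z W.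
Proof. by move=> uZ; rewrite !mem_cat (map_f (fun u => [fset c; x; u])). Qed.

Lemma mem_K_edges_y c x y Z W u : u \in Z -> [fset c; y; u] \in K_edges c x y Z W.
Proof. by move=> uZ; rewrite !mem_cat (map_f (fun u => [fset c; y; u])) ?orbT. Qed.

Lemma mem_K_edges_W c x y Z W u : u \in W -> [fset c; x; u] \in K_edges c x y Z W.
Proof. by move=> uW; rewrite !mem_cat (map_f (fun u => [fset c; x; u]) uW) ?orbT. Qed.

Lemma K_copy_swap t s (P : seq edge) c x y Z W :
  K_valid t s c x y Z W -> {subset K_edges c x y Z W <= P} ->
  K_valid t 0 c y x Z [::] /\ {subset K_edges c y x Z [::] <= P}.
Proof.
move=> /K_valid_inv[[cx cy xy] [cZ xZ yZ] uZ sZ] KP; split.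
  by rewrite /K_valid /= !inE cats0 !negb_or cy cx eq_sym xy cZ xZ yZ uZ sZ !eqxx.
move=> g /K_edgesP[u [[uinZ ->] | [uinZ ->] | []]]; rewrite ?in_nil //; apply: KP.
  exact: mem_K_edges_y.
exact: mem_K_edges_x.
Qed.

Lemma extend_K_copy t s (B P : seq edge) c x y z :
  K_copy_in B t s c x y -> {subset B <= P} ->
  [fset c; x; z] \in P -> [fset c; y; z] \in P ->
  z \notin [fset c; x; y] -> (forall g, g \in B -> z \notin g) ->
  K_copy_in P t.+1 s c x y.
Proof.
move=> [Z [W [/and3P[uK /eqP sZ /eqP sW] KB]]] BP xzP yzP zcxy zB.
have zZW : z \notin Z ++ W.
  rewrite mem_cat; apply/negP => /orP[] zin.
    by move: (zB _ (KB _ (mem_K_edges_x c x y W zin))); rewrite in_fset3 eqxx !orbT.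
  by move: (zB _ (KB _ (mem_K_edges_W c x y Z zin))); rewrite in_fset3 eqxx !orbT.
exists (z :: Z), W; split.
  suff uK' : uniq (z :: c :: x :: y :: Z ++ W).
    rewrite /K_valid [uniq _](perm_uniq (s2 := z :: c :: x :: y :: Z ++ W)).
      by apply/and3P; split; rewrite //= ?sZ ?sW.
    exact: permEl (perm_catCA [:: c; x; y] [:: z] (Z ++ W)).
  move: zcxy zZW; rewrite cons_uniq uK andbT in_fset3 inE !negb_or.
  by move=> /and3P[-> -> ->] ->.
move=> g; rewrite /K_edges /= inE mem_cat.
case/or3P=> [/eqP -> // | gK | ]; first by apply/BP/KB; rewrite mem_cat gK.
by rewrite inE mem_cat => /or3P[/eqP -> // | gK | gK]; apply/BP/KB; rewrite !mem_cat gK ?orbT.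
Qed.

Lemma K_deg2_vertex_not_main t s c x y Z W v (e1 e2 : edge) :
  2 < t -> K_valid t s c x y Z W ->
  (forall g, g \in K_edges c x y Z W -> v \in g -> g = e1 \/ g = e2) ->
  [/\ v != c, v != x & v != y].
Proof.
move=> t2 /K_valid_inv[[cx cy xy] [cZ xZ yZ] uZ sZ] deg2.
have spokes p : (p == x) || (p == y) -> (v == c) || (v == p) -> False.
  move=> pxy vcp; have pZ : p \notin Z by case/orP: pxy => /eqP ->.
  have uS : uniq [seq [fset c; p; u] | u <- Z].
    rewrite map_inj_in_uniq // => u w uinZ _; apply: fset3_inj.
      by apply: contraNneq cZ => <-.
    by apply: contraNneq pZ => <-.
  suff : size [seq [fset c; p; u] | u <- Z] <= size [:: e1; e2] by rewrite size_map sZ leqNgt t2.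
  apply: uniq_leq_size uS _ => _ /mapP[u uinZ ->].
  have vg : v \in [fset c; p; u] by rewrite in_fset3 orbA vcp.
  have gK : [fset c; p; u] \in K_edges c x y Z W.
    by case/orP: pxy => /eqP ->; [apply: mem_K_edges_x | apply: mem_K_edges_y].
  by case: (deg2 _ gK vg) => ->; rewrite !inE eqxx ?orbT.
by split; apply/negP => /eqP vE; [apply: (spokes x) | apply: (spokes x) | apply: (spokes y)];
  rewrite ?vE !eqxx ?orbT.
Qed.

Lemma count_spoke_eq_le1 (e : edge) a p q (P : pred nat) (Z : seq nat) : uniq Z ->
  {in Z, forall u, [/\ u != a, u != p & u != q]} ->
  {in Z, forall u, P u -> (e == [fset a; p; u]) || (e == [fset a; q; u])} ->
  count P Z <= 1.
Proof.
move=> uZ Zapq Pe; rewrite -size_filter.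
case E: (filter P Z) => [//|u0 s]; rewrite -E.
have [u0P u0Z] : P u0 /\ u0 \in Z by apply/andP; rewrite -mem_filter E inE eqxx.
apply: (uniq_leq_size (s2 := [:: u0])); first exact: filter_uniq.
move=> u; rewrite mem_filter inE => /andP[uP uinZ].
have [ua up uq] := Zapq u uinZ.
have : u \in e by case/orP: (Pe u uinZ uP) => /eqP ->; rewrite in_fset3 eqxx !orbT.
by case/orP: (Pe u0 u0Z u0P) => /eqP ->; rewrite in_fset3 (negbTE ua) ?(negbTE up) ?(negbTE uq).
Qed.

Lemma K_copy_of_common_neighbours (P : seq edge) t c p q (Z : seq nat) :
  [/\ c != p, c != q & p != q] -> [/\ c \notin Z, p \notin Z & q \notin Z] -> uniq Z ->
  t <= count (fun u => ([fset c; p; u] \in P) && ([fset c; q; u] \in P)) Z ->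
  K_copy_in P t 0 c p q.
Proof.
move=> [cp cq pq] [cZ pZ qZ] uZ tle.
set good := fun u => _ in tle; set Z' := take t (filter good Z).
have Z'Z u : u \in Z' -> good u && (u \in Z) by move/mem_take; rewrite mem_filter.
exists Z', [::]; split.
  have sZ' : size Z' = t by rewrite size_takel // size_filter.
  rewrite /K_valid cats0 /= sZ' eqxx andbT !inE !negb_or cp cq pq /=.
  rewrite take_uniq ?filter_uniq //= andbT.
  by apply/and3P; split; apply/negP => /Z'Z/andP[_]; apply/negP.
by move=> g /K_edgesP[u [[/Z'Z/andP[/andP[? ?] _] ->] | [/Z'Z/andP[/andP[? ?] _] ->] | []]].
Qed.

Lemma no_target_add_edge t (A B : seq edge) (e : edge) :
  ~ has_target t A -> ~ threat t A B -> e \notin B -> ~ has_target t (e :: A).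
Proof.
move=> noA noThreat eB [c [x [y [Z [W [HK HKA]]]]]].
have inA f : f \in K_edges c x y Z W -> f != e -> f \in A.
  by move=> fK fe; move: (HKA f fK); rewrite inE (negbTE fe).
case: (boolP (e \in A)) => eA.
  by apply: noA; exists c, x, y, Z, W; split => // f /HKA; rewrite inE => /orP[/eqP ->|].
case: (boolP (e \in K_edges c x y Z W)) => eK.
  by apply: noThreat; exists c, x, y, Z, W, e; split.
apply: noA; exists c, x, y, Z, W; split => // f fK; apply: inA => //.
by apply: contraNneq eK => <-.
Qed.

(* [S] models P_1's graph during the play: her edges [A] of the initial position, her
   last move [e], and the spokes [c, x, z] she answered with, whose vertices [z \in Fs]
   were fresh and so lie in no edge of [A]. *)
Section FreshSpokes.

Variables (t : nat) (A B : seq edge) (c x : nat) (e : edge) (Fs : seq nat).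
Hypothesis Fs_fresh : {in Fs, forall z, z \notin [fset c; x] /\ {in A, forall g, z \notin g}}.
Variable S : seq edge.
Hypothesis S_sub : {subset S <= e :: A ++ [seq [fset c; x; z] | z <- Fs]}.

Lemma S_edgeP g : g \in S ->
  [\/ g = e, g \in A | exists2 z, z \in Fs & g = [fset c; x; z]].
Proof.
move/S_sub; rewrite inE mem_cat => /or3P[/eqP -> | gA | /mapP[z zFs ->]];
  by [apply: Or31 | apply: Or32 | apply: Or33; exists z].
Qed.

Lemma fresh_spoke_degree z : z \in Fs ->
  {in S, forall g, z \in g -> g = e \/ g = [fset c; x; z]}.
Proof.
move=> zFs g /S_edgeP[-> | gA | [z' z'Fs ->]] zg; [by left | | right].
  by case: (Fs_fresh zFs) => _ /(_ g gA); rewrite zg.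
have [zcx _] := Fs_fresh zFs.
by move: zg; rewrite in_fset3 orbA -in_fset2 (negbTE zcx) => /eqP ->.
Qed.

Lemma spoke_pair_in_A_or_last a b q u : [fset a; b] = [fset c; x] ->
  b \notin [fset a; q; u] -> u \notin [fset a; b] ->
  [fset a; b; u] \in S -> [fset a; q; u] \in S ->
  [|| ([fset a; b; u] \in A) && ([fset a; q; u] \in A),
      e == [fset a; b; u] | e == [fset a; q; u]].
Proof.
move=> abcx bnq unab buS quS.
have quA : ([fset a; q; u] \in A) || (e == [fset a; q; u]).
  case/S_edgeP: quS => [-> | -> // | [z zFs E]]; first by rewrite eqxx orbT.
  by move: bnq; rewrite E in_fset3 orbA -in_fset2 -abcx in_fset2 eqxx orbT.
case/S_edgeP: buS => [-> | buA | [z zFs E]]; first by rewrite eqxx orbT.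
  by case/orP: quA => ->; rewrite ?buA ?orbT.
have : u \in [fset c; x; z] by rewrite -E in_fset3 eqxx !orbT.
rewrite in_fset3 orbA -in_fset2 -abcx (negbTE unab) /= => /eqP uz.
have quA' : [fset a; q; u] \notin A.
  by apply/negP => /(Fs_fresh zFs).2; rewrite -uz in_fset3 eqxx !orbT.
by move: quA; rewrite (negbTE quA') /= => ->; rewrite !orbT.
Qed.

Lemma K_copy_of_fresh_spokes s a b q Z W : [fset a; b] = [fset c; x] ->
  K_valid t.+1 s a b q Z W -> {subset K_edges a b q Z W <= S} -> K_copy_in A t 0 a b q.
Proof.
move=> abcx HK KS; have [[ab aq bq] [aZ bZ qZ] uZ sZ] := K_valid_inv HK.
apply: (K_copy_of_common_neighbours (Z := Z)) => //.
pose good u := ([fset a; b; u] \in A) && ([fset a; q; u] \in A); change (t <= count good Z).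
have notabq : {in Z, forall u, [/\ u != a, u != b & u != q]}.
  by move=> u uinZ; split; [move: aZ | move: bZ | move: qZ]; apply: contraNneq => <-.
have bad_le1 : count (predC good) Z <= 1.
  apply: (count_spoke_eq_le1 (e := e) uZ notabq) => u uinZ /negbTE ngood.
  have [ua ub uq] := notabq u uinZ.
  have bnq : b \notin [fset a; q; u] by rewrite in_fset3 eq_sym (eq_sym b u) !negb_or ab bq ub.
  have unab : u \notin [fset a; b] by rewrite in_fset2 negb_or ua ub.
  have := spoke_pair_in_A_or_last abcx bnq unab (KS _ (mem_K_edges_x a b q W uinZ))
    (KS _ (mem_K_edges_y a b q W uinZ)).
  by rewrite [_ && _]ngood.
by move: (count_predC good Z); rewrite sZ; lia.
Qed.

Lemma no_target_with_fresh_spokes : 1 < t -> c != x ->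
  ~ has_target t A -> ~ threat t A B -> e \notin B ->
  ~ (exists y, K_copy_in A t 0 c x y) -> ~ (exists y, K_copy_in A t 0 x c y) ->
  ~ has_target t S.
Proof.
move=> t1 cx noA noThreat eB noCX noXC [c' [x' [y' [Z [W [HK KS]]]]]].
have [allA | /allPn[f fK fnA]] := boolP (all (mem (e :: A)) (K_edges c' x' y' Z W)).
  apply: (no_target_add_edge noA noThreat eB).
  by exists c', x', y', Z, W; split => // g /(allP allA).
have [z zFs fE] : exists2 z, z \in Fs & f = [fset c; x; z].
  by case/S_edgeP: (KS f fK) fnA => [-> | fA | //] /negP[]; rewrite /= inE ?eqxx ?fA ?orbT.
have [zc' zx' zy'] : [/\ z != c', z != x' & z != y'].
  apply: (K_deg2_vertex_not_main (e1 := e) (e2 := [fset c; x; z]) _ HK) => [|g gK]; first by lia.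
  exact: fresh_spoke_degree zFs _ (KS g gK).
have [zcx _] := Fs_fresh zFs.
have spoke_contra s' a b q Z' W' u : K_valid t.+1 s' a b q Z' W' ->
    {subset K_edges a b q Z' W' <= S} -> z != a -> z != b -> f = [fset a; b; u] -> False.
  move=> HK' KS' za zb E.
  have : z \in [fset a; b; u] by rewrite -E fE in_fset3 eqxx !orbT.
  rewrite in_fset3 (negbTE za) (negbTE zb) /= => /eqP zu.
  have zab : z \notin [fset a; b] by rewrite in_fset2 negb_or za zb.
  have abcx : [fset a; b] = [fset c; x] by apply/esym/(fset3_pair zcx zab); rewrite -fE E zu.
  have [[ab _ _] _ _ _] := K_valid_inv HK'.
  have copyA := K_copy_of_fresh_spokes abcx HK' KS'.
  by case: (fset2_eq abcx ab) => [[ac bx] | [ax bc]]; [apply: noCX | apply: noXC];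
    exists q; rewrite -?ac -?bx -?ax -?bc.
case/K_edgesP: fK => u [[_ E] | [_ E] | [_ E]].
- exact: spoke_contra HK KS zc' zx' E.
- have [HK' KS'] := K_copy_swap HK KS; exact: spoke_contra HK' KS' zc' zy' E.
- exact: spoke_contra HK KS zc' zx' E.
Qed.

End FreshSpokes.

Definition fresh_vertex (s : seq edge) : nat := (\max_(g <- s) \max_(v <- g) v).+1.

Lemma fresh_vertex_notin (s : seq edge) g : g \in s -> fresh_vertex s \notin g.
Proof.
move=> gs; apply/negP => vg.
have := leq_bigmax_seq (F := fun g : edge => \max_(v <- g) v) _ gs isT.
by move/(leq_trans (leq_bigmax_seq (F := id) _ vg isT)); rewrite ltnn.
Qed.

Definition draw_vertex (A B : seq edge) (c x y : nat) (h : seq edge) : nat :=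
  fresh_vertex ([fset c; x; y] :: A ++ B ++ h).

(* The drawing strategy: claim [c, y, z] for a fresh [z], unless P_1 did not answer
   the previous such spoke [c, y, z] with [c, x, z]; then claim [c, x, z].  The vertex
   [z] of the previous spoke is recomputed from the history preceding it. *)
Definition draw_move (A B : seq edge) (c x y : nat) (h : seq edge) : edge :=
  let default := [fset c; y; draw_vertex A B c x y h] in
  if rev h is g2 :: g1 :: h' then
    let z := draw_vertex A B c x y (rev h') in
    if (g1 == [fset c; y; z]) && (g2 != [fset c; x; z]) then [fset c; x; z] else default
  else default.

Lemma history_cat2 m k : history m k.+2 = history m k ++ [:: m k; m k.+1].
Proof. by rewrite /history -addn2 iotaD map_cat. Qed.

Lemma mem_claimed2 (B : seq edge) m k i : ~~ odd i -> i < k -> m i \in claimed2 B m k.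
Proof. by move=> ei ik; rewrite mem_cat (map_f m) ?orbT // mem_filter ei mem_iota. Qed.

Section DrawingPlay.

Variables (A B : seq edge) (c x y : nat) (m : nat -> edge).
Hypothesis cxy : [/\ c != x, c != y & x != y].
Hypothesis follows_draw : forall k, ~~ odd k -> m k = draw_move A B c x y (history m k).

Let z k := draw_vertex A B c x y (history m k).

Definition deviates i := (m i == [fset c; y; z i]) && (m i.+1 != [fset c; x; z i]).

Lemma draw_move_0 : m 0 = [fset c; y; z 0].
Proof. by rewrite follows_draw. Qed.

Lemma draw_move_SS k : ~~ odd k ->
  m k.+2 = if deviates k then [fset c; x; z k] else [fset c; y; z k.+2].
Proof.
move=> ek; rewrite follows_draw /= ?negbK // /draw_move history_cat2 rev_cat /= revK.
by rewrite -history_cat2.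
Qed.

Lemma draw_vertex_fresh k :
  {in [fset c; x; y] :: A ++ B ++ history m k, forall g, z k \notin g}.
Proof. by move=> g; apply: fresh_vertex_notin. Qed.

Lemma draw_vertex_neq k : [/\ z k != c, z k != x & z k != y].
Proof.
have := draw_vertex_fresh (k := k) (mem_head _ _); rewrite in_fset3 !negb_or.
by case/and3P.
Qed.

Lemma spoke_fresh k v : [fset c; v; z k] \notin A ++ B ++ history m k.
Proof.
apply/negP => vin; have := @draw_vertex_fresh k [fset c; v; z k].
rewrite inE vin orbT => /(_ isT).
by rewrite in_fset3 eqxx !orbT.
Qed.

Lemma spoke_is_edge k v : v \in [:: x; y] -> is_edge [fset c; v; z k].
Proof.
have [cx cy xy] := cxy; have [zc zx zy] := draw_vertex_neq k.
by rewrite !inE => /orP[] /eqP ->; rewrite /is_edge card_fset3 // eq_sym.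
Qed.

Lemma draw_moves_legal k : ~~ odd k -> legal_move A B m k.
Proof.
have [cx cy xy] := cxy.
case: k => [_ | [// | k]].
  by rewrite /legal_move draw_move_0 spoke_is_edge ?spoke_fresh // !inE eqxx orbT.
rewrite /= negbK => ek; rewrite /legal_move draw_move_SS //.
case: ifP => [/andP[/eqP mk mk1] | _]; last by rewrite spoke_is_edge ?spoke_fresh // !inE eqxx orbT.
rewrite spoke_is_edge ?inE ?eqxx //= history_cat2 !catA mem_cat negb_or -!catA spoke_fresh /=.
rewrite !inE negb_or (eq_sym _ (m k.+1)) mk1 andbT mk.
apply: contra_neq xy => E; have [_ zx _] := draw_vertex_neq k.
have : x \in [fset c; y; z k] by rewrite -E in_fset3 eqxx orbT.
by rewrite in_fset3 (eq_sym x c) (eq_sym x (z k)) (negbTE cx) (negbTE zx) orbF => /eqP.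
Qed.

Lemma draw_vertices_fresh (s : seq nat) :
  {in map z s, forall v, v \notin [fset c; x] /\ {in A, forall g, v \notin g}}.
Proof.
move=> _ /mapP[i _ ->]; have [zc zx _] := draw_vertex_neq i; split.
  by rewrite in_fset2 negb_or zc zx.
by move=> g gA; apply: draw_vertex_fresh; rewrite inE mem_cat gA orbT.
Qed.

Lemma claimed1_no_deviation k : (forall i, ~~ odd i -> i.+2 <= k -> ~~ deviates i) ->
  {subset claimed1 A m k.+1 <= m k :: A ++ [seq [fset c; x; v] | v <- map z (iota 0 k)]}.
Proof.
move=> nodev.
have y_move i : ~~ odd i -> i <= k -> m i = [fset c; y; z i].
  case: i => [_ _ | [// | i]]; first exact: draw_move_0.
  by rewrite /= negbK => ei ik; rewrite draw_move_SS // (negbTE (nodev i ei ik)).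
move=> g; rewrite mem_cat => /orP[gA | /mapP[j]]; first by rewrite inE mem_cat gA orbT.
rewrite mem_filter mem_iota add0n ltnS => /andP[oj jk] ->.
have [-> | jk'] := eqVneq j k; first exact: mem_head.
case: j oj jk jk' => [// | i] /= ei ik ik'.
have i2k : i.+2 <= k by rewrite ltn_neqAle ik' ik.
have -> : m i.+1 = [fset c; x; z i].
  by apply/eqP; move: (nodev i ei i2k); rewrite /deviates y_move ?eqxx ?negbK // ltnW // ltnW.
rewrite !inE mem_cat; apply/orP; right; apply/orP; right.
apply/mapP; exists (z i) => //; apply/mapP; exists i => //.
by rewrite mem_iota (leq_trans _ i2k).
Qed.

Lemma deviation_completes t i k : ~~ odd i -> i.+2 < k -> deviates i ->
  K_copy_in B t (t - 2) c x y \/ K_copy_in B t (t - 2) c y x -> has_target t (claimed2 B m k).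
Proof.
move=> ei ik /andP[/eqP mi mi1].
have mi2 : m i.+2 = [fset c; x; z i] by rewrite draw_move_SS // /deviates mi eqxx mi1.
have yP : [fset c; y; z i] \in claimed2 B m k by rewrite -mi mem_claimed2 // ltnW // ltnW.
have xP : [fset c; x; z i] \in claimed2 B m k by rewrite -mi2 mem_claimed2 //= negbK.
have BP : {subset B <= claimed2 B m k} by move=> g gB; rewrite mem_cat gB.
have zB g : g \in B -> z i \notin g.
  by move=> gB; apply: draw_vertex_fresh; rewrite inE !mem_cat gB !orbT.
have [zc zx zy] := draw_vertex_neq i.
have zcxy : z i \notin [fset c; x; y] by rewrite in_fset3 !negb_or zc zx zy.
case=> copyB; [exists c, x, y | exists c, y, x]; apply: (extend_K_copy copyB BP _ _ _ zB) => //.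
by rewrite !inE in zcxy *; rewrite orbAC.
Qed.

End DrawingPlay.

Theorem lemma4p1 (t : nat) (A B : seq edge) (c x y : nat) :
  3 <= t ->
  all is_edge A -> all is_edge B -> uniq A -> uniq B ->
  (forall e, e \in A -> e \notin B) ->
  size A = (size B).+1 ->
  ~ has_target t A -> ~ has_target t B ->
  (K_copy_in B t (t - 2) c x y \/ K_copy_in B t (t - 2) c y x) ->
  ~ threat t A B ->
  ~ (exists y', K_copy_in A t 0 c x y') ->
  ~ (exists y', K_copy_in A t 0 x c y') ->
  exists sigma : seq edge -> edge, P2_draw_strategy t A B sigma.
Proof.
move=> t3 _ _ _ _ _ _ noA _ copyB noThreat noCX noXC.
have cxy : [/\ c != x, c != y & x != y].
  by case: copyB => [] [Z [W [/K_valid_inv[[c1 c2 c3] _ _ _] _]]]; split; rewrite // eq_sym.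
exists (draw_move A B c x y) => m follows legal1.
split=> [k | [|k] P1k]; first exact: (draw_moves_legal cxy follows).
  by case: noA; rewrite /claimed1 /= cats0 in P1k.
pose even_deviation i := ~~ odd i && deviates A B c x y m i.
have [/hasP[i] | /hasPn nodev] := boolP (has even_deviation (iota 0 k.-1)).
  rewrite mem_iota => /andP[_ ik] /andP[ei dev].
  by apply: (deviation_completes follows ei _ dev copyB); lia.
have {}nodev i : ~~ odd i -> i.+2 <= k -> ~~ deviates A B c x y m i.
  move=> ei ik; apply: contraTN (nodev i _) => [dev|]; rewrite /even_deviation ?ei ?mem_iota //; lia.
have eB : m k \notin B.
  have : legal_move A B m k.
    by case: (boolP (odd k)) => [/legal1 | /(draw_moves_legal cxy follows)].
  by rewrite /legal_move !mem_cat !negb_or => /andP[_ /and3P[_ ->]].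
have [cx _ _] := cxy.
have Ffresh := @draw_vertices_fresh A B c x y m (iota 0 k).
have Ssub := claimed1_no_deviation follows nodev.
by case: (no_target_with_fresh_spokes Ffresh Ssub _ cx noA noThreat eB noCX noXC P1k); lia.
Qed.
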